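(* Let $\varphi$ be a flow on a locally compact metric space $X$, let $N\subset X$ be an isolating neighborhood and let $\gamma:\mathbb R\to X$ be a full solution. The following are equivalent: (i) $\gamma^{-1}(N)$ is right infinite (respectively left infinite); (ii) $\gamma$ wades through $N$ in plus infinity (respectively minus infinity); (iii) $\operatorname{Inv}N\cap\omega(\gamma)\ne\emptyset$ (respectively $\operatorname{Inv}N\cap\alpha(\gamma)\neq\emptyset$).
   Context: A full solution is a map $\gamma:\mathbb R\to X$ with $\gamma(s+t)=\varphi(\gamma(s),t)$. $\alpha(\gamma)=\bigcap_{t<0}\operatorname{cl}\gamma((-\infty,t])$, $\omega(\gamma)=\bigcap_{t>0}\operatorname{cl}\gamma([t,\infty))$. $\operatorname{Inv}N=\{x\in N\mid\varphi(x,\mathbb R)\subset N\}$; an isolating neighborhood is a compact $N$ with $\operatorname{Inv}N\subset\operatorname{int}N$. A set $A\subset\mathbb R$ is right infinite if $\sup\{b-a\mid a,b\ge0,\ [a,b]\subset A\}=\infty$, and left infinite if $\sup\{b-a\mid a,b\le0,\ [a,b]\subset A\}=\infty$. $\gamma$ wades through $N$ in plus infinity if there are real sequences $(t^-_n),(t^+_n)$ with $t^-_n\to+\infty$, $t^+_n-t^-_n\to+\infty$ and $\gamma([t^-_n,t^+_n])\subset N$ for all $n$; it wades through $N$ in minus infinity if there are such sequences with $t^+_n\to-\infty$, $t^+_n-t^-_n\to+\infty$ and $\gamma([t^-_n,t^+_n])\subset N$ for all $n$. *)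

From HB Require Import structures.
From mathcomp Require Import all_boot all_order all_algebra.
From mathcomp Require Import all_classical all_reals all_analysis.
Set Implicit Arguments. Unset Strict Implicit. Unset Printing Implicit Defensive.
Import Order.TTheory GRing.Theory Num.Theory.
Import numFieldNormedType.Exports.
Local Open Scope classical_set_scope.
Local Open Scope ring_scope.

Section Flows.
Context {R : realType} {X : metricType R}.

Definition is_flow (phi : X -> R -> X) : Prop :=
  continuous (fun p : X * R => phi p.1 p.2) /\
  (forall x, phi x 0 = x) /\
  (forall x s t, phi (phi x s) t = phi x (s + t)).

Definition full_solution (phi : X -> R -> X) (gamma : R -> X) : Prop :=
  forall s t, gamma (s + t) = phi (gamma s) t.

Definition InvSet (phi : X -> R -> X) (N : set X) : set X :=
  [set x | N x /\ forall t, N (phi x t)].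

Definition isolating_nbhd (phi : X -> R -> X) (N : set X) : Prop :=
  compact N /\ InvSet phi N `<=` interior N.

Definition alpha_limit (gamma : R -> X) : set X :=
  \bigcap_(t in [set t : R | t < 0]) closure (gamma @` [set s | s <= t]).

Definition omega_limit (gamma : R -> X) : set X :=
  \bigcap_(t in [set t : R | 0 < t]) closure (gamma @` [set s | t <= s]).

Definition right_infinite (A : set R) : Prop :=
  forall M : R, exists a b : R, [/\ 0 <= a, 0 <= b,
    [set s | a <= s <= b] `<=` A & M < b - a].

Definition left_infinite (A : set R) : Prop :=
  forall M : R, exists a b : R, [/\ a <= 0, b <= 0,
    [set s | a <= s <= b] `<=` A & M < b - a].

Definition wades_plus (gamma : R -> X) (N : set X) : Prop :=
  exists tm tp : R ^nat,
    [/\ tm @ \oo --> +oo, (fun n => tp n - tm n) @ \oo --> +oo &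
        forall n, gamma @` [set s | tm n <= s <= tp n] `<=` N].

Definition wades_minus (gamma : R -> X) (N : set X) : Prop :=
  exists tm tp : R ^nat,
    [/\ tp @ \oo --> -oo, (fun n => tp n - tm n) @ \oo --> +oo &
        forall n, gamma @` [set s | tm n <= s <= tp n] `<=` N].

End Flows.

From HB Require Import structures.
From mathcomp Require Import all_boot all_order all_algebra.
From mathcomp Require Import all_classical all_reals all_analysis.
From mathcomp Require Import lra.
Import Order.TTheory GRing.Theory Num.Theory.
Import numFieldNormedType.Exports.
Local Open Scope classical_set_scope.
Local Open Scope ring_scope.
Set Implicit Arguments. Unset Strict Implicit. Unset Printing Implicit Defensive.

(* If gamma wades through N, the midpoints m_n of the wading intervals tend to
   +oo and, for every fixed t, gamma (m_n + t) eventually lies in N; a cluster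
   point x of gamma (m_n) in the compact set N is then in omega(gamma), and by
   continuity of the time-t maps its whole orbit stays in the closed set N.
   Conversely, if x is in Inv N and in omega(gamma), then the orbit segment
   phi(x, [-T, T]) lies in the interior of N, so by compactness of [-T, T] a
   whole neighbourhood of x follows it inside N for time T; gamma enters that
   neighbourhood at arbitrarily late times, which produces wading intervals of
   length 2T for every T.  The statements at minus infinity follow by
   reversing time. *)

Lemma cluster_map_closed (T U : topologicalType) (F : set_system T)
    (f : T -> U) (C : set U) x :
  closed C -> {for x, continuous f} -> (\forall y \near F, C (f y)) ->
  cluster F x -> C (f x).
Proof.
move=> C_closed f_cont FC clx; rewrite ((closure_id C).1 C_closed) => B Bfx.
have [y [/= Cfy Bfy]] := clx _ _ FC (f_cont _ Bfx).
by exists (f y).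
Qed.

Lemma continuous_fixed_snd (T U W : topologicalType) (f : T -> U -> W) u :
  continuous (fun p : T * U => f p.1 p.2) -> continuous (f^~ u).
Proof.
move=> cont x.
apply: (@continuous_comp _ _ _ (fun y => (y, u)) (fun p : T * U => f p.1 p.2)).
  by apply: (@cvg_pair _ _ _ (nbhs x) (nbhs x) (nbhs u) _ _ _ id (fun=> u));
    [exact: cvg_id | exact: cvg_cst].
exact: cont.
Qed.

Section PlusInfinity.
Context {R : realType} {X : metricType R}.
Variables (phi : X -> R -> X) (N : set X) (gamma : R -> X).

Lemma wades_plus_right_infinite :
  wades_plus gamma N -> right_infinite (gamma @^-1` N).
Proof.
move=> [tm [tp [tm_oo len_oo inN]]] M.
have [n [tm_ge0 len_gtM]] : exists n, 0 <= tm n /\ `|M| < tp n - tm n.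
  have H : \forall n \near \oo, 0 <= tm n /\ `|M| < tp n - tm n.
    by near=> n; split; near: n; [exact: cvgry_ge | exact: cvgry_gt].
  by have [n ?] := filter_ex H; exists n.
exists (tm n), (tp n); split => //.
- by have := normr_ge0 M; lra.
- by move=> s /= s_in; apply: (inN n); exists s.
- exact: le_lt_trans (ler_norm M) len_gtM.
Unshelve. all: end_near. Qed.

Lemma right_infinite_wades_plus :
  right_infinite (gamma @^-1` N) -> wades_plus gamma N.
Proof.
move=> ri.
have /choice [ab Hab] : forall n : nat, exists ab : R * R,
    [/\ 0 <= ab.1, 0 <= ab.2, [set s | ab.1 <= s <= ab.2] `<=` gamma @^-1` N
      & 2 * n%:R < ab.2 - ab.1].
  by move=> n; have [a [b ?]] := ri (2 * n%:R); exists (a, b).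
exists (fun n => (ab n).1 + n%:R), (fun n => (ab n).2); split.
- apply/cvgryPge => A; near=> n; have [a_ge0 _ _ _] := Hab n.
  have : A <= n%:R by near: n; exact: nbhs_infty_ger.
  lra.
- apply/cvgryPge => A; near=> n; have [_ _ _ len_gt] := Hab n.
  have : A <= n%:R by near: n; exact: nbhs_infty_ger.
  lra.
- move=> n _ [s /= /andP[s_ge s_le] <-]; have [_ _ sub _] := Hab n.
  apply: sub => /=; apply/andP; split => //.
  by have := ler0n R n; lra.
Unshelve. all: end_near. Qed.

Lemma wades_plus_midpoints : wades_plus gamma N ->
  exists m : R ^nat, m @ \oo --> +oo /\
    forall t, \forall n \near \oo, N (gamma (m n + t)).
Proof.
move=> [tm [tp [tm_oo len_oo inN]]].
exists (fun n => (tm n + tp n) / 2); split.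
  apply/cvgryPge => A; near=> n.
  have : A <= tm n by near: n; exact: cvgry_ge.
  have : 0 <= tp n - tm n by near: n; exact: cvgry_ge.
  lra.
move=> t; near=> n; apply: (inN n); exists ((tm n + tp n) / 2 + t) => //=.
have : 2 * `|t| <= tp n - tm n by near: n; exact: cvgry_ge.
have := ler_norm t; have := ler_norm (- t); rewrite normrN.
by move=> ? ? ?; apply/andP; split; lra.
Unshelve. all: end_near. Qed.

Lemma late_segments_wades_plus :
  (forall T t0, 0 < t0 ->
    exists s, t0 <= s /\ forall t, -T <= t <= T -> N (gamma (s + t))) ->
  wades_plus gamma N.
Proof.
move=> late_seg.
have /choice [s Hs] : forall n : nat, exists s, 2 * n%:R + 1 <= s /\
    forall t, - n%:R <= t <= n%:R -> N (gamma (s + t)).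
  by move=> n; apply: late_seg; have := ler0n R n; lra.
exists (fun n => s n - n%:R), (fun n => s n + n%:R); split.
- apply/cvgryPge => A; near=> n; have [? _] := Hs n.
  have : A <= n%:R by near: n; exact: nbhs_infty_ger.
  lra.
- apply/cvgryPge => A; near=> n.
  have : A <= n%:R by near: n; exact: nbhs_infty_ger.
  have := ler0n R n; lra.
- move=> n _ [u /= /andP[? ?] <-]; have [_ seg_in] := Hs n.
  have := seg_in (u - s n); rewrite addrCA subrr addr0; apply.
  by apply/andP; split; lra.
Unshelve. all: end_near. Qed.

Lemma cluster_omega_limit (m : R ^nat) x :
  m @ \oo --> +oo -> cluster ((gamma \o m) @ \oo) x -> omega_limit gamma x.
Proof.
move=> m_oo clx t _; apply: (cluster_map_closed (f := id)) clx => //.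
  exact: closed_closure.
apply: filterS (cvgry_ge m_oo t) => n tn.
by apply: subset_closure; exists (m n).
Qed.

Hypothesis phi_cont : continuous (fun p : X * R => phi p.1 p.2).
Hypothesis sol : full_solution phi gamma.

Lemma cluster_InvSet (m : R ^nat) x : closed N ->
  (forall t, \forall n \near \oo, N (gamma (m n + t))) ->
  cluster ((gamma \o m) @ \oo) x -> InvSet phi N x.
Proof.
move=> N_closed inN clx; split.
  apply: (cluster_map_closed (f := id)) clx => //.
  by apply: filterS (inN 0) => n; rewrite addr0.
move=> t; apply: (cluster_map_closed (f := phi^~ t)) clx => //.
  exact: continuous_fixed_snd.
by apply: filterS (inN t) => n /=; rewrite sol.
Qed.

Lemma wades_plus_omega_limit : compact N -> wades_plus gamma N ->
  InvSet phi N `&` omega_limit gamma !=set0.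
Proof.
move=> N_compact /wades_plus_midpoints [m [m_oo inN]].
have inN0 : ((gamma \o m) @ \oo) N.
  by apply: filterS (inN 0) => n; rewrite addr0.
have [x [_ clx]] := N_compact _ _ inN0.
exists x; split; last exact: cluster_omega_limit clx.
apply: cluster_InvSet clx => //.
exact: compact_closed (@metric_hausdorff _ X) N_compact.
Qed.

Lemma near_orbit_segment_in x T :
  (forall t, -T <= t <= T -> interior N (phi x t)) ->
  \forall y \near x, forall t, -T <= t <= T -> N (phi y t).
Proof.
move=> int_orbit.
have cover :=
  (compact_near_coveringP `[-T, T]%classic).1 (@segment_compact R (- T) T).
have near_point t : `[-T, T]%classic t ->
    \forall t' \near t & y \near x, N (phi y t').
  rewrite /= in_itv /= => /int_orbit /(@phi_cont (x, t)) near_xt.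
  have swap := near_swap (nbhs x) (nbhs t) (fun y t' => N (phi y t')).
  exact: (@eq_ind Prop _ id near_xt _ swap).
apply: filterS (cover X (nbhs x) (fun y t => N (phi y t)) _ near_point).
by move=> y inN t /andP[? ?]; apply: inN; rewrite /= in_itv /=; apply/andP.
Qed.

Hypothesis flowD : forall x s t, phi (phi x s) t = phi x (s + t).

Lemma InvSet_flow x t : InvSet phi N x -> InvSet phi N (phi x t).
Proof. by move=> [_ orbit_in]; split=> // s; rewrite flowD. Qed.

Lemma omega_limit_late_segments x : InvSet phi N `<=` interior N ->
  InvSet phi N x -> omega_limit gamma x ->
  forall T t0, 0 < t0 ->
    exists s, t0 <= s /\ forall t, -T <= t <= T -> N (gamma (s + t)).
Proof.
move=> isolating Inv_x omega_x T t0 t0_gt0.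
have near_x := near_orbit_segment_in (T := T)
  (fun t _ => isolating _ (InvSet_flow t Inv_x)).
have [_ [[s s_ge <-] seg_in]] := omega_x t0 t0_gt0 _ near_x.
by exists s; split => // t ?; rewrite sol; exact: seg_in.
Qed.

End PlusInfinity.

Lemma wades_plus_characterization {R : realType} {X : metricType R}
    (phi : X -> R -> X) (N : set X) (gamma : R -> X) :
  is_flow phi -> isolating_nbhd phi N -> full_solution phi gamma ->
  (right_infinite (gamma @^-1` N) <-> wades_plus gamma N) /\
  (wades_plus gamma N <-> InvSet phi N `&` omega_limit gamma !=set0).
Proof.
move=> [cont [_ flowD]] [N_compact isolating] sol; split.
  split; first exact: right_infinite_wades_plus.
  exact: wades_plus_right_infinite.
split; first exact: wades_plus_omega_limit.
move=> [x [Inv_x omega_x]]; apply: late_segments_wades_plus.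
exact: (omega_limit_late_segments cont sol flowD isolating Inv_x omega_x).
Qed.

Lemma left_infinite_opp {R : realType} (A : set R) :
  left_infinite A <-> right_infinite [set s | A (- s)].
Proof.
split=> infA M; have [a [b [? ? sub ?]]] := infA M; exists (- b), (- a); split.
- by rewrite oppr_ge0.
- by rewrite oppr_ge0.
- by move=> s /andP[? ?]; apply: sub => /=; apply/andP; split; lra.
- lra.
- by rewrite oppr_le0.
- by rewrite oppr_le0.
- move=> s /andP[? ?]; rewrite -[s]opprK; apply: sub => /=.
  by apply/andP; split; lra.
- lra.
Qed.

Section TimeReversal.
Context {R : realType} {X : metricType R}.
Implicit Types (phi : X -> R -> X) (N : set X) (gamma : R -> X).

Definition rev_flow phi : X -> R -> X := fun x t => phi x (- t).
Definition rev_path gamma : R -> X := fun s => gamma (- s).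

Lemma wades_minus_rev gamma N :
  wades_minus gamma N <-> wades_plus (rev_path gamma) N.
Proof.
have len_opp (tm tp : R ^nat) :
    (fun n => - tm n - - tp n) = (fun n => tp n - tm n).
  by apply/funext => n; lra.
split=> -[tm [tp [end_oo len_oo inN]]].
  exists (fun n => - tp n), (fun n => - tm n); split.
  - exact/cvgNry.
  - by rewrite len_opp.
  - move=> n _ [u /andP[? ?] <-]; apply: (inN n); exists (- u) => //.
    by apply/andP; split; lra.
exists (fun n => - tp n), (fun n => - tm n); split.
- exact/cvgNrNy.
- by rewrite len_opp.
- move=> n _ [u /andP[? ?] <-]; rewrite -[u]opprK; apply: (inN n).
  by exists (- u) => //; apply/andP; split; lra.
Qed.

Lemma alpha_limit_rev gamma : alpha_limit gamma = omega_limit (rev_path gamma).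
Proof.
have past t : gamma @` [set s | s <= t] = rev_path gamma @` [set s | - t <= s].
  apply/seteqP; split => _ [s /= ? <-].
    by exists (- s); rewrite /rev_path ?opprK //=; lra.
  by exists (- s) => //=; lra.
apply/seteqP; split => x alpha_x t /= ?.
  by rewrite -[t]opprK -past; apply: alpha_x => /=; lra.
by rewrite past; apply: alpha_x => /=; lra.
Qed.

Lemma InvSet_rev_flow phi N : InvSet (rev_flow phi) N = InvSet phi N.
Proof.
apply/seteqP; split => x [? orbit_in]; split => // t.
  by rewrite -[t]opprK; exact: orbit_in.
exact: orbit_in.
Qed.

Lemma is_flow_rev phi : is_flow phi -> is_flow (rev_flow phi).
Proof.
move=> [cont [flow0 flowD]]; split; last first.
  by split=> [x | x s t]; rewrite /rev_flow ?oppr0 ?flowD ?opprD.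
move=> p; apply: (@continuous_comp _ _ _ (fun q : X * R => (q.1, - q.2))
  (fun p : X * R => phi p.1 p.2)); last exact: cont.
apply: (@cvg_pair _ _ _ (nbhs p) (nbhs p.1) (nbhs (- p.2)) _ _ _
  fst (fun q => - q.2)).
  exact: cvg_fst.
by apply: cvgN; exact: cvg_snd.
Qed.

Lemma isolating_nbhd_rev phi N :
  isolating_nbhd phi N -> isolating_nbhd (rev_flow phi) N.
Proof. by rewrite /isolating_nbhd InvSet_rev_flow. Qed.

Lemma full_solution_rev phi gamma :
  full_solution phi gamma -> full_solution (rev_flow phi) (rev_path gamma).
Proof. by move=> sol s t; rewrite /rev_path /rev_flow opprD sol. Qed.

End TimeReversal.

Theorem proposition5p21 (R : realType) (X : metricType R)
  (phi : X -> R -> X) (N : set X) (gamma : R -> X) :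
  locally_compact [set: X] ->
  is_flow phi ->
  isolating_nbhd phi N ->
  full_solution phi gamma ->
  ((right_infinite (gamma @^-1` N) <-> wades_plus gamma N) /\
   (wades_plus gamma N <-> InvSet phi N `&` omega_limit gamma !=set0)) /\
  ((left_infinite (gamma @^-1` N) <-> wades_minus gamma N) /\
   (wades_minus gamma N <-> InvSet phi N `&` alpha_limit gamma !=set0)).
Proof.
move=> _ flow isolating sol; split; first exact: wades_plus_characterization.
rewrite left_infinite_opp wades_minus_rev alpha_limit_rev -(InvSet_rev_flow phi).
apply: wades_plus_characterization.
- exact: is_flow_rev.
- exact: isolating_nbhd_rev.
- exact: full_solution_rev.
Qed.
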